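(* Let $K$ be a pathwise connected poset. (i) $(\Lambda,\lambda)_K$ is a net bundle of discrete groups and $(\Lambda^l,\lambda)_K$ is a net of discrete groups, and the inclusions $i_o:\Lambda^l_o\to\Lambda_o$ define a monomorphism $i:(\Lambda^l,\lambda)_K\to(\Lambda,\lambda)_K$. (ii) If $K$ has a symmetry group $G$, then, with the actions $g_*$, both nets are $G$-covariant and $i$ is a monomorphism of $G$-covariant nets.
   Context: Simplices and paths. For a poset $K$: $0$-simplices are elements of $K$; an $n$-simplex $x$ ($n\ge1$) consists of $(n-1)$-simplices $\partial_0x,\dots,\partial_nx$ and a support $|x|\in K$ with $|\partial_ix|\le|x|$. The opposite $\overline b$ of a $1$-simplex $b$ has the same support and swapped faces. $\iota_a$ is the degenerate $1$-simplex at $a$ (faces and support $a$). For $a\le o$, $(oa)$ is the $1$-simplex with $\partial_1=a$, $\partial_0=o$, support $o$. A path $p=b_n*\cdots*b_1$ is a concatenation of $1$-simplices with $\partial_0b_i=\partial_1b_{i+1}$; its support $|p|$ is the set of supports of the $b_i$; the opposite path is $\overline p=\overline{b_1}*\cdots*\overline{b_n}$. $K$ is pathwise connected if any two elements are joined by a path. $w$-equivalence: two paths with the same endpoints are $w$-equivalent if one is obtained from the other by finitely many of the following moves or their inverses: (1) inserting a degenerate $1$-simplex $\iota_a$; (2) replacing $(oa)*(ae)$ by $(oe)$ for $e\le a\le o$; (3) replacing $\overline b*b$ by $\iota_{\partial_1b}$. Write $[p]_w$ for the class. Groups of loops: $\Lambda_o$ is the set of $w$-classes of loops over $o$ with product $[p]_w[q]_w=[p*q]_w$;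 $\Lambda^l_o\subseteq\Lambda_o$ consists of classes containing some path whose support is contained in $o$ (i.e. all supports $\le o$). For $o\le a$, $\lambda_{ao}([p]_w):=[(ao)*p*\overline{(ao)}]_w$. Nets of groups: a net of discrete groups $(\mathcal G,\jmath)_K$ assigns groups $\mathcal G_o$ and injective homomorphisms $\jmath_{ao}:\mathcal G_o\to\mathcal G_a$ ($o\le a$) with $\jmath_{eo}=\jmath_{ea}\circ\jmath_{ao}$; a net bundle if all $\jmath_{ao}$ are isomorphisms; a monomorphism (over $\mathrm{id}_K$) is a family of injective homomorphisms commuting with the inclusions. Symmetry: a symmetry group $G$ of $K$ is a group acting on $K$ by order automorphisms (injectively into $\mathrm{Aut}(K)$); it acts on simplices by $gx$ with faces $g\partial_ix$ and support $g|x|$, and on paths simplexwise; $g_*([p]_w):=[gp]_w$. A net is $G$-covariant if there are isomorphisms $\alpha^g_o:\mathcal G_o\to\mathcal G_{go}$ with $\alpha^h_{go}\circ\alpha^g_o=\alpha^{hg}_o$ and $\alpha^g_o\circ\jmath_{oa}=\jmath_{go\,ga}\circ\alpha^g_a$; a morphism $\phi$ of $G$-covariant nets satisfies $\beta^g_o\circ\phi_o=\phi_{go}\circ\alpha^g_o$. *)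

From Stdlib Require Import Relations ClassicalEpsilon.
From HB Require Import structures.
From mathcomp Require Import all_boot all_order.
Set Implicit Arguments. Unset Strict Implicit. Unset Printing Implicit Defensive.
Import Order.Theory.
Local Open Scope order_scope.

Definition is_group (G : Type) (mul : G -> G -> G) (one : G) (inv : G -> G) : Prop :=
  [/\ (forall x y z, mul x (mul y z) = mul (mul x y) z),
      (forall x, mul one x = x), (forall x, mul x one = x),
      (forall x, mul (inv x) x = one) & (forall x, mul x (inv x) = one)].

Definition is_hom (G H : Type) (mulG : G -> G -> G) (mulH : H -> H -> H) (f : G -> H) :=
  forall x y, f (mulG x y) = mulH (f x) (f y).

Section Poset.
Variables (d : Order.disp_t) (K : porderType d).

Record simplex1 := Simplex1 {
  face0 : K; face1 : K; supp : K;
  face0_le : face0 <= supp; face1_le : face1 <= supp }.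

Definition opp1 (b : simplex1) : simplex1 := Simplex1 (face1_le b) (face0_le b).

Definition iota1 (a : K) : simplex1 := @Simplex1 a a a (lexx a) (lexx a).

Definition edge (o a : K) (H : a <= o) : simplex1 := @Simplex1 o a o (lexx o) H.

(* A path b_n * ... * b_1 is represented by the list [:: b_1; ...; b_n]
   in traversal order (b_1 is traversed first).  It must be non-empty
   and satisfy d0 b_i = d1 b_(i+1). *)
Fixpoint chain (b : simplex1) (p : seq simplex1) : Prop :=
  if p is c :: p' then face0 b = face1 c /\ chain c p' else True.

Definition is_path (p : seq simplex1) : Prop :=
  if p is b :: p' then chain b p' else False.

Definition pstart (a : K) (p : seq simplex1) : Prop :=
  if p is b :: _ then face1 b = a else False.
Definition pend (e : K) (p : seq simplex1) : Prop :=
  if p is b :: p' then face0 (last b p') = e else False.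

Definition path_from_to (a e : K) (p : seq simplex1) : Prop :=
  [/\ is_path p, pstart a p & pend e p].

Definition is_loop (o : K) (p : seq simplex1) : Prop := path_from_to o o p.

(* the product p * q (first q, then p) *)
Definition pcat (p q : seq simplex1) : seq simplex1 := q ++ p.

Definition popp (p : seq simplex1) : seq simplex1 := rev (map opp1 p).

Definition supp_in (p : seq simplex1) (o : K) : bool := all (fun b => supp b <= o) p.

Definition pathwise_connected : Prop :=
  forall a e : K, exists p, path_from_to a e p.

Inductive wmove : seq simplex1 -> seq simplex1 -> Prop :=
| wm_iota (a : K) : wmove [::] [:: iota1 a]
| wm_comp (o a e : K) (Hea : e <= a) (Hao : a <= o) (Heo : e <= o) :
    wmove [:: edge Hea; edge Hao] [:: edge Heo]
| wm_opp (b : simplex1) : wmove [:: b; opp1 b] [:: iota1 (face1 b)].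

Definition wstep (p q : seq simplex1) : Prop :=
  [/\ is_path p, is_path q &
      exists l1 l2 x y, wmove x y /\ p = l1 ++ x ++ l2 /\ q = l1 ++ y ++ l2].

Definition wequiv : relation (seq simplex1) := clos_refl_sym_trans _ wstep.

Lemma path_single (b : simplex1) : path_from_to (face1 b) (face0 b) [:: b].
Proof. by []. Qed.

Lemma path_cons2 a e b c p :
  path_from_to a e [:: b, c & p] -> a = face1 b /\ path_from_to (face0 b) e (c :: p).
Proof. by case=> /= [[H1 H2] H3 H4]; split=> //; split. Qed.

Lemma path_cat a m e p q :
  path_from_to a m p -> path_from_to m e q -> path_from_to a e (p ++ q).
Proof.
elim: p a => [|b p IH] a; first by case.
case: p IH => [|c p] IH.
  case=> _ /= <- <-; clear IH; case: q => [|c q]; first by case.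
  by case=> /= Hc Hs He; split.
move=> /path_cons2 [-> Hp] Hq; have [/= H1 H2 H3] := IH _ Hp Hq.
by split.
Qed.

Lemma path_opp a e p : path_from_to a e p -> path_from_to e a (popp p).
Proof.
elim: p a => [|b p IH] a; first by case.
case: p IH => [|c p] IH.
  by case=> _ /= <- <-; split.
move=> /path_cons2 [-> Hp].
rewrite /popp map_cons rev_cons -cats1.
exact: (path_cat (IH _ Hp) (path_single (opp1 b))).
Qed.

Lemma loop_iota (o : K) : is_loop o [:: iota1 o].
Proof. by []. Qed.

Lemma loop_cat o p q : is_loop o p -> is_loop o q -> is_loop o (pcat p q).
Proof. by move=> Hp Hq; exact: path_cat Hq Hp. Qed.

Lemma loop_opp o p : is_loop o p -> is_loop o (popp p).
Proof. exact: path_opp. Qed.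

Definition conjp (o a : K) (H : o <= a) (p : seq simplex1) : seq simplex1 :=
  pcat (pcat [:: edge H] p) (popp [:: edge H]).

Lemma loop_conjp o a (H : o <= a) p : is_loop o p -> is_loop a (conjp H p).
Proof.
move=> Hp; rewrite /conjp /pcat.
apply: (path_cat (m := o)); first exact: (path_opp (path_single (edge H))).
exact: (path_cat Hp (path_single (edge H))).
Qed.

Lemma supp_in_cat p q o : supp_in p o -> supp_in q o -> supp_in (pcat p q) o.
Proof. by rewrite /supp_in /pcat all_cat => -> ->. Qed.

Lemma supp_in_opp p o : supp_in p o -> supp_in (popp p) o.
Proof. by rewrite /supp_in /popp all_rev all_map. Qed.

Lemma supp_in_iota o : supp_in [:: iota1 o] o.
Proof. by rewrite /supp_in /= lexx. Qed.

Lemma supp_in_conjp o a (H : o <= a) p : supp_in p o -> supp_in (conjp H p) a.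
Proof.
move=> Hp; rewrite /conjp.
have He : supp_in [:: edge H] a by rewrite /supp_in /= lexx.
apply: (supp_in_cat _ (supp_in_opp He)); apply: (supp_in_cat He).
move: Hp; rewrite /supp_in => Hp.
by apply: sub_all Hp => b /= Hb; exact: le_trans Hb H.
Qed.

Definition Lam (o : K) : Type :=
  {C : seq simplex1 -> Prop | exists p, is_loop o p /\ C = wequiv p}.

Definition cls (o : K) (p : seq simplex1) (Hp : is_loop o p) : Lam o :=
  exist _ (wequiv p) (ex_intro _ p (conj Hp erefl)).

Definition rep (o : K) (x : Lam o) : seq simplex1 :=
  proj1_sig (constructive_indefinite_description _ (proj2_sig x)).
Lemma rep_loop o (x : Lam o) : is_loop o (rep x).
Proof. exact: (proj1 (proj2_sig (constructive_indefinite_description _ (proj2_sig x)))). Qed.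

Definition Lmul (o : K) (x y : Lam o) : Lam o := cls (loop_cat (rep_loop x) (rep_loop y)).
Definition Lone (o : K) : Lam o := cls (loop_iota o).
Definition Linv (o : K) (x : Lam o) : Lam o := cls (loop_opp (rep_loop x)).

Definition lam (o a : K) (H : o <= a) (x : Lam o) : Lam a :=
  cls (loop_conjp H (rep_loop x)).

Definition Laml (o : K) : Type :=
  {C : seq simplex1 -> Prop | exists p, [/\ is_loop o p, supp_in p o & C = wequiv p]}.

Definition clsl (o : K) (p : seq simplex1) (Hp : is_loop o p) (Hs : supp_in p o) : Laml o :=
  exist _ (wequiv p) (ex_intro _ p (And3 Hp Hs erefl)).

Definition repl (o : K) (x : Laml o) : seq simplex1 :=
  proj1_sig (constructive_indefinite_description _ (proj2_sig x)).
Lemma repl_spec o (x : Laml o) : is_loop o (repl x) /\ supp_in (repl x) o.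
Proof.
by case: (proj2_sig (constructive_indefinite_description _ (proj2_sig x))).
Qed.

Definition Llmul (o : K) (x y : Laml o) : Laml o :=
  clsl (loop_cat (proj1 (repl_spec x)) (proj1 (repl_spec y)))
       (supp_in_cat (proj2 (repl_spec x)) (proj2 (repl_spec y))).
Definition Llone (o : K) : Laml o := clsl (loop_iota o) (supp_in_iota o).
Definition Llinv (o : K) (x : Laml o) : Laml o :=
  clsl (loop_opp (proj1 (repl_spec x))) (supp_in_opp (proj2 (repl_spec x))).
Definition laml (o a : K) (H : o <= a) (x : Laml o) : Laml a :=
  clsl (loop_conjp H (proj1 (repl_spec x))) (supp_in_conjp H (proj2 (repl_spec x))).

Lemma laml_lam o (x : Laml o) : exists p, is_loop o p /\ sval x = wequiv p.
Proof. by case: (proj2_sig x) => p [Hp _ He]; exists p. Qed.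
Definition incl (o : K) (x : Laml o) : Lam o := exist _ (sval x) (laml_lam x).

Definition is_net (G : K -> Type) (mul : forall o, G o -> G o -> G o)
    (one : forall o, G o) (inv : forall o, G o -> G o)
    (j : forall o a : K, o <= a -> G o -> G a) : Prop :=
  [/\ (forall o, is_group (mul o) (one o) (inv o)),
      (forall o a (H : o <= a), is_hom (mul o) (mul a) (j o a H) /\ injective (j o a H)) &
      (forall o a e (Hoa : o <= a) (Hae : a <= e) (Hoe : o <= e) (x : G o),
          j o e Hoe x = j a e Hae (j o a Hoa x))].

Definition is_net_bundle (G : K -> Type) mul one inv j : Prop :=
  @is_net G mul one inv j /\ (forall o a (H : o <= a), bijective (j o a H)).

Definition net_mono (G G' : K -> Type)
    (mul : forall o, G o -> G o -> G o) (mul' : forall o, G' o -> G' o -> G' o)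
    (j : forall o a : K, o <= a -> G o -> G a) (j' : forall o a : K, o <= a -> G' o -> G' a)
    (phi : forall o, G o -> G' o) : Prop :=
  (forall o, is_hom (mul o) (mul' o) (phi o) /\ injective (phi o)) /\
  (forall o a (H : o <= a) (x : G o), phi a (j o a H x) = j' o a H (phi o x)).

Record symmetry := Symmetry {
  sgrp : Type;
  smul : sgrp -> sgrp -> sgrp;
  sone : sgrp;
  sinv : sgrp -> sgrp;
  sgrp_group : is_group smul sone sinv;
  sact : sgrp -> K -> K;
  sact_mono : forall g x y, x <= y -> sact g x <= sact g y;
  sact_refl : forall g x y, sact g x <= sact g y -> x <= y;
  sact_bij : forall g, bijective (sact g);
  sact_one : forall x, sact sone x = x;
  sact_mul : forall g h x, sact (smul h g) x = sact h (sact g x);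
  sact_faithful : forall g h, (forall x, sact g x = sact h x) -> g = h }.

Variable S : symmetry.

Definition sact1 (g : sgrp S) (b : simplex1) : simplex1 :=
  Simplex1 (sact_mono g (face0_le b)) (sact_mono g (face1_le b)).
Definition pact (g : sgrp S) (p : seq simplex1) : seq simplex1 := map (sact1 g) p.

Lemma path_act g a e p :
  path_from_to a e p -> path_from_to (sact g a) (sact g e) (pact g p).
Proof.
elim: p a => [|b p IH] a; first by case.
case: p IH => [|c p] IH.
  by case=> _ /= <- <-; split.
move=> /path_cons2 [-> Hp]; rewrite /pact map_cons -cat1s.
exact: (path_cat (path_single (sact1 g b)) (IH _ Hp)).
Qed.

Lemma loop_act g o p : is_loop o p -> is_loop (sact g o) (pact g p).
Proof. exact: path_act. Qed.

Lemma supp_in_act g o p : supp_in p o -> supp_in (pact g p) (sact g o).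
Proof.
rewrite /supp_in /pact all_map => Hp.
by apply: sub_all Hp => b /= Hb; exact: sact_mono.
Qed.

Definition Lact (g : sgrp S) (o : K) (x : Lam o) : Lam (sact g o) :=
  cls (loop_act g (rep_loop x)).
Definition Llact (g : sgrp S) (o : K) (x : Laml o) : Laml (sact g o) :=
  clsl (loop_act g (proj1 (repl_spec x))) (supp_in_act g (proj2 (repl_spec x))).

(* G-covariant net: isomorphisms alpha^g_o : G_o -> G_(g o) with
   alpha^h_(g o) o alpha^g_o = alpha^(h g)_o  (up to the canonical
   identification of G_((hg) o) with G_(h (g o))) and
   alpha^g_o o j_(o a) = j_(g o, g a) o alpha^g_a  for a <= o. *)
Definition covariant (G : K -> Type) (mul : forall o, G o -> G o -> G o)
    (j : forall o a : K, o <= a -> G o -> G a)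
    (alpha : forall (g : sgrp S) (o : K), G o -> G (sact g o)) : Prop :=
  [/\ (forall g o, is_hom (mul o) (mul (sact g o)) (alpha g o) /\ bijective (alpha g o)),
      (forall g h o (e : sact (smul h g) o = sact h (sact g o)) (x : G o),
          alpha h (sact g o) (alpha g o x) = eq_rect _ G (alpha (smul h g) o x) _ e) &
      (forall g o a (H : a <= o) (H' : sact g a <= sact g o) (x : G a),
          alpha g o (j a o H x) = j _ _ H' (alpha g a x))].

Definition cov_morph (G G' : K -> Type)
    (alpha : forall (g : sgrp S) (o : K), G o -> G (sact g o))
    (beta : forall (g : sgrp S) (o : K), G' o -> G' (sact g o))
    (phi : forall o, G o -> G' o) : Prop :=
  forall g o (x : G o), beta g o (phi o x) = phi (sact g o) (alpha g o x).

End Poset.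

From Stdlib Require Import Relations ClassicalEpsilon ProofIrrelevance.
From Stdlib Require Import FunctionalExtensionality PropExtensionality.
From mathcomp Require Import all_boot all_order.
Set Implicit Arguments. Unset Strict Implicit. Unset Printing Implicit Defensive.
Import Order.Theory.
Local Open Scope order_scope.

(* The w-classes of paths form a groupoid: concatenation is associative on the
   nose, degenerate simplices are units by move (1), and [p ++ popp p] collapses
   to a degenerate simplex by repeated use of move (3).  Each Lambda_o is a vertex
   group, and conjugation by any path c from o to a is an isomorphism onto
   Lambda_a, with inverse conjugation by the opposite path; lambda_ao is
   conjugation by the edge (ao), and move (2) turns (ea)(ao) into (eo), giving
   lambda_eo = lambda_ea lambda_ao.  Lambda^l_o is the subgroup of classes with
   a representative supported below o, stable under lambda, so its net structure
   is inherited through the injective inclusion.  A symmetry acts simplexwise,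
   maps moves to moves and hence descends to classes, compatibly with all of the
   above. *)

Section Paths.
Variables (d : Order.disp_t) (K : porderType d).
Implicit Types (a e m o : K) (b : simplex1 K) (c l p q r : seq (simplex1 K)).

Lemma simplex1_eq b b' :
  face0 b = face0 b' -> face1 b = face1 b' -> supp b = supp b' -> b = b'.
Proof.
case: b b' => f0 f1 s ? ? [g0 g1 t ? ?] /= E0 E1 Es; subst.
by f_equal; apply: bool_irrelevance.
Qed.

Lemma opp1K : involutive (@opp1 d K).
Proof. by case. Qed.

Lemma popp_cat p q : popp (p ++ q) = popp q ++ popp p.
Proof. by rewrite /popp map_cat rev_cat. Qed.

Lemma poppK : involutive (@popp d K).
Proof. by move=> p; rewrite /popp map_rev revK -map_comp (eq_map opp1K) map_id. Qed.

Lemma path_from_toE a e p b0 : p <> [::] ->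
  path_from_to a e p <-> [/\ is_path p, face1 (head b0 p) = a & face0 (last b0 p) = e].
Proof. by case: p. Qed.

Lemma chain_cat_cons b b' p q : chain b (p ++ b' :: q) -> face0 (last b p) = face1 b'.
Proof. by elim: p b => [|b'' p IH] b /= [E H] //; exact: IH. Qed.

(* Only inserting [iota1 a] at an end of the path needs the path hypotheses. *)
Lemma wstep_head_last p q b0 : wstep p q ->
  face1 (head b0 p) = face1 (head b0 q) /\ face0 (last b0 p) = face0 (last b0 q).
Proof.
case=> + + [l1 [l2 [x [y [M [Ep Eq]]]]]]; rewrite {}Ep {}Eq.
case: M => [a|o a e Hea Hao Heo|b]; last 2 first.
- by move=> _ _; split; [case: l1 | rewrite !last_cat /=; case: l2].
- by move=> _ _; split; [case: l1 | rewrite !last_cat /=; case: l2].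
move=> Pp Pq; split.
  case: l1 Pp Pq => [|b l1] //= Pp Pq.
  by case: l2 Pp Pq => [|b l2] //= Pp [<-].
case: l2 Pp Pq => [|b l2] Pp Pq; last by rewrite !last_cat.
case: l1 Pp Pq => [|b l1] //= Pp Pq.
by rewrite cats0 last_cat (chain_cat_cons Pq).
Qed.

Lemma wequiv_refl p : wequiv p p.
Proof. exact: rst_refl. Qed.

Lemma wequiv_sym p q : wequiv p q -> wequiv q p.
Proof. exact: rst_sym. Qed.

Lemma wequiv_trans q p r : wequiv p q -> wequiv q r -> wequiv p r.
Proof. exact: rst_trans. Qed.

Lemma wequiv_path_from_to p q a e :
  wequiv p q -> path_from_to a e p <-> path_from_to a e q.
Proof.
elim=> {p q} [p q S|p|p q _ IH|p q r _ IH1 _ IH2] //; [|by rewrite IH|by rewrite IH1].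
have [Pp Pq _] := S; have [E1 E2] := wstep_head_last (iota1 a) S.
rewrite (path_from_toE _ _ (iota1 a) (_ : p <> [::])); last by case: p Pp {S E1 E2}.
rewrite (path_from_toE _ _ (iota1 a) (_ : q <> [::])); last by case: q Pq {S E1 E2}.
by rewrite E1 E2; split; case.
Qed.

Lemma wequiv_ctx l r a e (s s' : seq (simplex1 K)) :
  (forall s0, path_from_to a e s0 -> is_path (l ++ s0 ++ r)) ->
  path_from_to a e s -> wequiv s s' -> wequiv (l ++ s ++ r) (l ++ s' ++ r).
Proof.
move=> HP Hs W; elim: W Hs => {s s'} [s s' S|s|s s' W IH|s t s' W1 IH1 W2 IH2] Hs.
- have Hs' : path_from_to a e s' by rewrite -(wequiv_path_from_to _ _ (rst_step _ _ _ _ S)).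
  case: S => _ _ [l1 [l2 [x [y [M [Es Es']]]]]]; subst s s'.
  apply: rst_step; split; [exact: HP|exact: HP|].
  by exists (l ++ l1), (l2 ++ r), x, y; rewrite !catA.
- exact: wequiv_refl.
- by apply/wequiv_sym/IH; rewrite (wequiv_path_from_to _ _ W).
- by apply: wequiv_trans (IH1 Hs) (IH2 _); rewrite -(wequiv_path_from_to _ _ W1).
Qed.

Lemma wequiv_catl a m e p q q' :
  path_from_to a m p -> path_from_to m e q -> wequiv q q' -> wequiv (p ++ q) (p ++ q').
Proof.
move=> Hp Hq W; rewrite -[q]cats0 -[q']cats0.
by apply: (wequiv_ctx (a := m) (e := e)) => // s0 /(path_cat Hp); rewrite cats0; case.
Qed.

Lemma wequiv_catr a m e p p' q :
  path_from_to a m p -> path_from_to m e q -> wequiv p p' -> wequiv (p ++ q) (p' ++ q).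
Proof.
move=> Hp Hq W; rewrite -[p ++ q]cat0s -[p' ++ q]cat0s.
by apply: (wequiv_ctx (a := a) (e := m)) => // s0 /path_cat /(_ Hq) [].
Qed.

Lemma wequiv_cat a m e p p' q q' :
  path_from_to a m p -> path_from_to m e q -> wequiv p p' -> wequiv q q' ->
  wequiv (p ++ q) (p' ++ q').
Proof.
move=> Hp Hq Wp Wq; apply: wequiv_trans (wequiv_catr Hp Hq Wp) _.
by apply: (wequiv_catl (a := a) _ Hq Wq); rewrite -(wequiv_path_from_to _ _ Wp).
Qed.

Lemma wequiv_iotal a e p : path_from_to a e p -> wequiv ([:: iota1 a] ++ p) p.
Proof.
move=> Hp; apply/wequiv_sym/rst_step; split.
- by case: Hp.
- by case: (path_cat (path_single (iota1 a)) Hp).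
- by exists [::], p, [::], [:: iota1 a]; split=> //; exact: wm_iota.
Qed.

Lemma wequiv_iotar a e p : path_from_to a e p -> wequiv (p ++ [:: iota1 e]) p.
Proof.
move=> Hp; apply/wequiv_sym/rst_step; split.
- by case: Hp.
- by case: (path_cat Hp (path_single (iota1 e))).
- by exists p, [::], [::], [:: iota1 e]; rewrite /= !cats0; split=> //; exact: wm_iota.
Qed.

Lemma wequiv_opp1 b : wequiv [:: b; opp1 b] [:: iota1 (face1 b)].
Proof.
apply: rst_step; split=> //.
by exists [::], [::], [:: b; opp1 b], [:: iota1 (face1 b)]; split=> //; exact: wm_opp.
Qed.

Lemma wequiv_edge_comp o a e (Hoa : o <= a) (Hae : a <= e) (Hoe : o <= e) :
  wequiv [:: edge Hoa; edge Hae] [:: edge Hoe].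
Proof.
apply: rst_step; split=> //.
by exists [::], [::], [:: edge Hoa; edge Hae], [:: edge Hoe]; split=> //; exact: wm_comp.
Qed.

Lemma wequiv_trivial_catl a e (s : seq (simplex1 K)) p :
  is_loop a s -> path_from_to a e p -> wequiv s [:: iota1 a] -> wequiv (s ++ p) p.
Proof.
move=> Hs Hp W; apply: wequiv_trans (wequiv_iotal Hp).
exact: wequiv_catr Hs Hp W.
Qed.

Lemma wequiv_cat_popp a e p : path_from_to a e p -> wequiv (p ++ popp p) [:: iota1 a].
Proof.
elim: p a => [|b p IH] a; first by case.
case: p IH => [|b' p] IH; first by case=> _ /= <- _; exact: wequiv_opp1.
move=> /path_cons2 [-> Hp]; set p' := b' :: p in IH Hp *.
have Hob := path_single (opp1 b).
have Hpp := path_cat Hp (path_opp Hp).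
rewrite -cat1s popp_cat -!catA [p' ++ _]catA.
apply: wequiv_trans (wequiv_opp1 b).
apply: (wequiv_catl (path_single b) (path_cat Hpp Hob)).
exact: wequiv_trivial_catl Hpp Hob (IH _ Hp).
Qed.

Lemma wequiv_popp_cat a e p : path_from_to a e p -> wequiv (popp p ++ p) [:: iota1 e].
Proof. by move=> Hp; have := wequiv_cat_popp (path_opp Hp); rewrite poppK. Qed.

(* The inverse of a move is not a move, so [popp] respects [wequiv] only through
   the group laws: [popp p ~ popp p ++ p' ++ popp p' ~ popp p ++ p ++ popp p' ~ popp p']. *)
Lemma wequiv_popp a e p p' :
  path_from_to a e p -> wequiv p p' -> wequiv (popp p) (popp p').
Proof.
move=> Hp W; have Hp' : path_from_to a e p' by rewrite -(wequiv_path_from_to _ _ W).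
have Ho := path_opp Hp; have Ho' := path_opp Hp'.
apply: wequiv_trans (wequiv_sym (wequiv_iotar Ho)) _.
apply: wequiv_trans (_ : wequiv (popp p ++ p ++ popp p') _).
  apply: (wequiv_catl Ho (path_single (iota1 a))); apply: wequiv_sym.
  exact: wequiv_trans (wequiv_catr Hp Ho' W) (wequiv_cat_popp Hp').
rewrite catA; apply: wequiv_trivial_catl (path_cat Ho Hp) Ho' _.
exact: wequiv_popp_cat Hp.
Qed.

Definition pconj c p := popp c ++ p ++ c.

Lemma loop_pconj o a c p : path_from_to o a c -> is_loop o p -> is_loop a (pconj c p).
Proof. by move=> Hc Hp; apply: path_cat (path_opp Hc) (path_cat Hp Hc). Qed.

Lemma pconj_cat c c' p : pconj (c ++ c') p = pconj c' (pconj c p).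
Proof. by rewrite /pconj popp_cat -!catA. Qed.

Lemma wequiv_pconj o a c c' p p' : path_from_to o a c -> is_loop o p ->
  wequiv c c' -> wequiv p p' -> wequiv (pconj c p) (pconj c' p').
Proof.
move=> Hc Hp Wc Wp; apply: wequiv_cat (path_opp Hc) (path_cat Hp Hc) _ _.
  exact: wequiv_popp Hc Wc.
exact: wequiv_cat Hp Hc Wp Wc.
Qed.

Lemma pconj_iota o p : is_loop o p -> wequiv (pconj [:: iota1 o] p) p.
Proof.
move=> Hp; apply: wequiv_trans (wequiv_iotar Hp).
exact: wequiv_iotal (path_cat Hp (path_single (iota1 o))).
Qed.

Lemma pconjK o a c p : path_from_to o a c -> is_loop o p ->
  wequiv (pconj (popp c) (pconj c p)) p.
Proof.
move=> Hc Hp; rewrite -pconj_cat; apply: wequiv_trans (pconj_iota Hp).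
have Hcc := path_cat Hc (path_opp Hc).
by apply: wequiv_pconj Hcc Hp (wequiv_cat_popp Hc) (wequiv_refl p).
Qed.

Lemma pconjVK o a c q : path_from_to o a c -> is_loop a q ->
  wequiv (pconj c (pconj (popp c) q)) q.
Proof. by move=> Hc Hq; have := pconjK (path_opp Hc) Hq; rewrite poppK. Qed.

Lemma pconj_mul o a c p q : path_from_to o a c -> is_loop o p -> is_loop o q ->
  wequiv (pconj c (q ++ p)) (pconj c q ++ pconj c p).
Proof.
move=> Hc Hp Hq; rewrite /pconj -!catA.
apply: (wequiv_catl (path_opp Hc) (path_cat Hq (path_cat Hp Hc))).
apply: (wequiv_catl Hq (path_cat Hp Hc)); rewrite catA.
apply/wequiv_sym/(wequiv_trivial_catl (path_cat Hc (path_opp Hc)) (path_cat Hp Hc)).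
exact: wequiv_cat_popp Hc.
Qed.

End Paths.

Lemma sval_inj (A : Type) (P : A -> Prop) : injective (@sval A P).
Proof. exact: eq_sig_hprop (fun _ _ _ => proof_irrelevance _ _ _). Qed.

Lemma is_group_inj (G H : Type) (mulG : G -> G -> G) oneG invG (mulH : H -> H -> H) oneH invH
    (f : H -> G) :
  injective f -> is_hom mulH mulG f -> f oneH = oneG -> (forall x, f (invH x) = invG (f x)) ->
  is_group mulG oneG invG -> is_group mulH oneH invH.
Proof.
move=> f_inj fM f1 fV [mulA mul1g mulg1 mulVg mulgV].
by split=> *; apply: f_inj; rewrite ?fM ?fV ?f1 ?mulA ?mul1g ?mulg1 ?mulVg ?mulgV.
Qed.

Section Nets.
Variables (d : Order.disp_t) (K : porderType d).

Lemma is_net_sub (G G' : K -> Type)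
    (mul : forall o, G o -> G o -> G o) one inv (j : forall o a : K, o <= a -> G o -> G a)
    (mul' : forall o, G' o -> G' o -> G' o) one' inv' (j' : forall o a : K, o <= a -> G' o -> G' a)
    (phi : forall o, G o -> G' o) :
  is_net mul' one' inv' j' -> net_mono mul mul' j j' phi ->
  (forall o, phi o (one o) = one' o) -> (forall o x, phi o (inv o x) = inv' o (phi o x)) ->
  is_net mul one inv j.
Proof.
move=> [grp' j'_hom j'_trans] [phi_mono phi_j] phi1 phiV.
have phi_inj o : injective (phi o) by case: (phi_mono o).
have phiM o : is_hom (mul o) (mul' o) (phi o) by case: (phi_mono o).
split.
- by move=> o; apply: is_group_inj (phi_inj o) (phiM o) (phi1 o) (phiV o) (grp' o).
- move=> o a H; have [j'M j'_inj] := j'_hom o a H; split.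
  + by move=> x y; apply: (phi_inj a); rewrite phiM !phi_j phiM j'M.
  + by move=> x y /(congr1 (phi a)); rewrite !phi_j => /j'_inj /phi_inj.
- by move=> o a e Hoa Hae Hoe x; apply: (phi_inj e); rewrite !phi_j (j'_trans _ _ _ Hoa Hae).
Qed.

Variable S : symmetry K.

Lemma covariant_sub (G G' : K -> Type)
    (mul : forall o, G o -> G o -> G o) (j : forall o a : K, o <= a -> G o -> G a)
    (alpha : forall (g : sgrp S) o, G o -> G (sact g o))
    (mul' : forall o, G' o -> G' o -> G' o) (j' : forall o a : K, o <= a -> G' o -> G' a)
    (alpha' : forall (g : sgrp S) o, G' o -> G' (sact g o))
    (phi : forall o, G o -> G' o) :
  covariant mul' j' alpha' -> net_mono mul mul' j j' phi -> cov_morph alpha alpha' phi ->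
  (forall g o, bijective (alpha g o)) -> covariant mul j alpha.
Proof.
move=> [alpha'_iso alpha'_comp alpha'_j] [phi_mono phi_j] phi_alpha alpha_bij.
have phi_inj o : injective (phi o) by case: (phi_mono o).
have phiM o : is_hom (mul o) (mul' o) (phi o) by case: (phi_mono o).
split.
- move=> g o; split=> // x y; apply: phi_inj.
  by rewrite phiM -!phi_alpha phiM; case: (alpha'_iso g o) => ->.
- move=> g h o e x; apply: phi_inj.
  by rewrite -map_subst -!phi_alpha alpha'_comp.
- by move=> g o a H H' x; apply: phi_inj; rewrite phi_j -!phi_alpha phi_j alpha'_j.
Qed.

End Nets.

Section Loops.
Variables (d : Order.disp_t) (K : porderType d).
Implicit Types (a e o : K) (c p q : seq (simplex1 K)).

Lemma wequiv_classE p q : wequiv p = wequiv q <-> wequiv p q.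
Proof.
split=> [-> | W]; first exact: wequiv_refl.
apply: functional_extensionality => r; apply: propositional_extensionality.
by split; [apply: wequiv_trans (wequiv_sym W) | apply: wequiv_trans W].
Qed.

Lemma cls_eq o p q (Hp : is_loop o p) (Hq : is_loop o q) : cls Hp = cls Hq <-> wequiv p q.
Proof.
rewrite -wequiv_classE; split=> [/(congr1 sval) // | E].
by apply: sval_inj.
Qed.

Lemma cls_rep o (x : Lam o) : cls (rep_loop x) = x.
Proof.
apply: sval_inj => /=.
by case: (proj2_sig (constructive_indefinite_description _ (proj2_sig x))).
Qed.

Lemma rep_cls o p (Hp : is_loop o p) : wequiv (rep (cls Hp)) p.
Proof. by apply/(cls_eq (rep_loop _)); rewrite cls_rep. Qed.

Lemma sval_eq_rect (u v : K) (E : u = v) (x : Lam u) :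
  sval (eq_rect u (@Lam d K) x v E) = sval x.
Proof. by case: v / E. Qed.

Lemma Lam_ind o (P : Lam o -> Prop) :
  (forall p (Hp : is_loop o p), P (cls Hp)) -> forall x, P x.
Proof. by move=> IH x; rewrite -(cls_rep x). Qed.

Lemma Lmul_cls o p q (Hp : is_loop o p) (Hq : is_loop o q) :
  Lmul (cls Hp) (cls Hq) = cls (loop_cat Hp Hq).
Proof. by apply/cls_eq; apply: wequiv_cat (rep_loop _) (rep_loop _) (rep_cls Hq) (rep_cls Hp). Qed.

Lemma Linv_cls o p (Hp : is_loop o p) : Linv (cls Hp) = cls (loop_opp Hp).
Proof. by apply/cls_eq; apply: wequiv_popp (rep_loop _) (rep_cls Hp). Qed.

Lemma Lam_group o : is_group (@Lmul d K o) (Lone o) (@Linv d K o).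
Proof.
split.
- elim/Lam_ind => p Hp; elim/Lam_ind => q Hq; elim/Lam_ind => r Hr.
  by rewrite !Lmul_cls; apply/cls_eq; rewrite /pcat catA; apply: wequiv_refl.
- by elim/Lam_ind => p Hp; rewrite Lmul_cls; apply/cls_eq; apply: wequiv_iotar Hp.
- by elim/Lam_ind => p Hp; rewrite Lmul_cls; apply/cls_eq; apply: wequiv_iotal Hp.
- by elim/Lam_ind => p Hp; rewrite Linv_cls Lmul_cls; apply/cls_eq; apply: wequiv_cat_popp Hp.
- by elim/Lam_ind => p Hp; rewrite Linv_cls Lmul_cls; apply/cls_eq; apply: wequiv_popp_cat Hp.
Qed.

Definition Lconj o a c (Hc : path_from_to o a c) (x : Lam o) : Lam a :=
  cls (loop_pconj Hc (rep_loop x)).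

Lemma Lconj_cls o a c (Hc : path_from_to o a c) p (Hp : is_loop o p) :
  Lconj Hc (cls Hp) = cls (loop_pconj Hc Hp).
Proof. by apply/cls_eq; apply: wequiv_pconj Hc (rep_loop _) (wequiv_refl c) (rep_cls Hp). Qed.

Lemma lamE o a (H : o <= a) (x : Lam o) : lam H x = Lconj (path_single (edge H)) x.
Proof. exact: sval_inj. Qed.

Lemma lam_cls o a (H : o <= a) p (Hp : is_loop o p) : lam H (cls Hp) = cls (loop_conjp H Hp).
Proof. by rewrite lamE Lconj_cls; apply: sval_inj. Qed.

Section Conjugation.
Variables (o a : K) (c : seq (simplex1 K)) (Hc : path_from_to o a c).

Lemma Lconj_mul : is_hom (@Lmul d K o) (@Lmul d K a) (Lconj Hc).
Proof.
elim/Lam_ind => p Hp; elim/Lam_ind => q Hq.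
by rewrite Lmul_cls !Lconj_cls Lmul_cls; apply/cls_eq; exact: pconj_mul Hc Hp Hq.
Qed.

Lemma LconjK : cancel (Lconj Hc) (Lconj (path_opp Hc)).
Proof. by elim/Lam_ind => p Hp; rewrite !Lconj_cls; apply/cls_eq; exact: pconjK Hc Hp. Qed.

Lemma LconjVK : cancel (Lconj (path_opp Hc)) (Lconj Hc).
Proof. by elim/Lam_ind => q Hq; rewrite !Lconj_cls; apply/cls_eq; exact: pconjVK Hc Hq. Qed.

Lemma Lconj_cat e c' (Hc' : path_from_to a e c') (x : Lam o) :
  Lconj Hc' (Lconj Hc x) = Lconj (path_cat Hc Hc') x.
Proof.
elim/Lam_ind: x => p Hp.
by rewrite !Lconj_cls; apply/cls_eq; rewrite pconj_cat; apply: wequiv_refl.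
Qed.

Lemma Lconj_wequiv c' (Hc' : path_from_to o a c') (x : Lam o) :
  wequiv c c' -> Lconj Hc x = Lconj Hc' x.
Proof.
move=> W; elim/Lam_ind: x => p Hp.
by rewrite !Lconj_cls; apply/cls_eq; apply: wequiv_pconj Hc Hp W (wequiv_refl p).
Qed.

End Conjugation.

Lemma Lam_net_bundle : is_net_bundle (@Lmul d K) (@Lone d K) (@Linv d K) (@lam d K).
Proof.
have lam_bij o a (H : o <= a) : bijective (lam H).
  by exists (Lconj (path_opp (path_single (edge H)))) => x; rewrite lamE ?LconjK ?LconjVK.
split=> //; split.
- exact: Lam_group.
- move=> o a H; split; last exact: bij_inj.
  by move=> x y; rewrite !lamE Lconj_mul.
- move=> o a e Hoa Hae Hoe x; rewrite !lamE Lconj_cat.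
  by apply/Lconj_wequiv/wequiv_sym/wequiv_edge_comp.
Qed.

Lemma incl_inj o : injective (@incl d K o).
Proof. by move=> x y /(congr1 sval) E; apply: sval_inj. Qed.

Lemma incl_repl o (x : Laml o) : incl x = cls (proj1 (repl_spec x)).
Proof.
apply: sval_inj => /=.
by case: (proj2_sig (constructive_indefinite_description _ (proj2_sig x))).
Qed.

Lemma incl_clsl o p (Hp : is_loop o p) (Hs : supp_in p o) : incl (clsl Hp Hs) = cls Hp.
Proof. exact: sval_inj. Qed.

Lemma incl_Llmul o (x y : Laml o) : incl (Llmul x y) = Lmul (incl x) (incl y).
Proof. by rewrite incl_clsl !incl_repl Lmul_cls. Qed.

Lemma incl_Llone o : incl (Llone o) = Lone o.
Proof. exact: incl_clsl. Qed.

Lemma incl_Llinv o (x : Laml o) : incl (Llinv x) = Linv (incl x).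
Proof. by rewrite incl_clsl !incl_repl Linv_cls. Qed.

Lemma incl_laml o a (H : o <= a) (x : Laml o) : incl (laml H x) = lam H (incl x).
Proof. by rewrite incl_clsl !incl_repl lam_cls. Qed.

Lemma incl_mono : net_mono (@Llmul d K) (@Lmul d K) (@laml d K) (@lam d K) (@incl d K).
Proof. by split=> [o|]; [split; [apply: incl_Llmul | apply: incl_inj] | apply: incl_laml]. Qed.

Lemma Laml_net : is_net (@Llmul d K) (@Llone d K) (@Llinv d K) (@laml d K).
Proof.
have [Lam_net _] := Lam_net_bundle.
exact: is_net_sub Lam_net incl_mono incl_Llone incl_Llinv.
Qed.

End Loops.

Section Symmetry.
Variables (d : Order.disp_t) (K : porderType d) (S : symmetry K).
Implicit Types (g h : sgrp S) (a o : K) (b : simplex1 K) (p q : seq (simplex1 K)).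

Lemma sactK g : cancel (sact g) (sact (sinv g)).
Proof. by case: (sgrp_group S) => _ _ _ mulVg _ x; rewrite -sact_mul mulVg sact_one. Qed.

Lemma sactVK g : cancel (sact (sinv g)) (sact g).
Proof. by case: (sgrp_group S) => _ _ _ _ mulgV x; rewrite -sact_mul mulgV sact_one. Qed.

Lemma sact1_iota g a : sact1 g (iota1 a) = iota1 (sact g a).
Proof. exact: simplex1_eq. Qed.

Lemma sact1_edge g o a (H : a <= o) (H' : sact g a <= sact g o) : sact1 g (edge H) = edge H'.
Proof. exact: simplex1_eq. Qed.

Lemma sact1_opp g b : sact1 g (opp1 b) = opp1 (sact1 g b).
Proof. exact: simplex1_eq. Qed.

Lemma pact_mul g h p : pact h (pact g p) = pact (smul h g) p.
Proof.
rewrite /pact -map_comp; apply: eq_map => b.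
by apply: simplex1_eq; rewrite /= sact_mul.
Qed.

Lemma pactK g : cancel (pact g) (pact (sinv g)).
Proof.
move=> p; rewrite pact_mul -[RHS]map_id; apply: eq_map => b.
by apply: simplex1_eq; rewrite /= sact_mul sactK.
Qed.

Lemma pactVK g : cancel (pact (sinv g)) (pact g).
Proof.
move=> p; rewrite pact_mul -[RHS]map_id; apply: eq_map => b.
by apply: simplex1_eq; rewrite /= sact_mul sactVK.
Qed.

Lemma pact_conjp g o a (H : a <= o) (H' : sact g a <= sact g o) p :
  pact g (conjp H p) = conjp H' (pact g p).
Proof. by rewrite /pact !map_cat /= sact1_opp (sact1_edge _ H'). Qed.

Lemma is_path_pact g p : is_path p -> is_path (pact g p).
Proof.
case: p => //= b p; elim: p b => [|b' p IH] b //= [E Hp].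
by split; [rewrite E | exact: IH].
Qed.

Lemma wmove_pact g p q : wmove p q -> wmove (pact g p) (pact g q).
Proof.
case=> [a|o a e Hea Hao Heo|b] /=.
- by rewrite sact1_iota; apply: wm_iota.
- rewrite (sact1_edge _ (sact_mono g Hea)) (sact1_edge _ (sact_mono g Hao)).
  by rewrite (sact1_edge _ (sact_mono g Heo)); apply: wm_comp.
- by rewrite sact1_opp sact1_iota; apply: (wm_opp (sact1 g b)).
Qed.

Lemma wequiv_pact g p q : wequiv p q -> wequiv (pact g p) (pact g q).
Proof.
elim=> {p q} [p q [Pp Pq [l1 [l2 [x [y [M [Ep Eq]]]]]]]|p|p q _ IH|p q r _ IH1 _ IH2].
- subst p q; apply: rst_step; split; [exact: is_path_pact|exact: is_path_pact|].
  exists (pact g l1), (pact g l2), (pact g x), (pact g y).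
  by rewrite /pact !map_cat; split=> //; apply: wmove_pact.
- exact: wequiv_refl.
- exact: wequiv_sym IH.
- exact: wequiv_trans IH1 IH2.
Qed.

Lemma Lact_cls g o p (Hp : is_loop o p) : Lact g (cls Hp) = cls (loop_act g Hp).
Proof. by apply/cls_eq; apply/wequiv_pact/rep_cls. Qed.

Lemma loop_act_sinv g o p : is_loop (sact g o) p -> is_loop o (pact (sinv g) p).
Proof. by move/(loop_act (sinv g)); rewrite sactK. Qed.

Lemma supp_in_act_sinv g o p : supp_in p (sact g o) -> supp_in (pact (sinv g) p) o.
Proof. by move/(supp_in_act (sinv g)); rewrite sactK. Qed.

Definition Lact_sinv g o (y : Lam (sact g o)) : Lam o := cls (loop_act_sinv (rep_loop y)).

Definition Llact_sinv g o (y : Laml (sact g o)) : Laml o :=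
  clsl (loop_act_sinv (proj1 (repl_spec y))) (supp_in_act_sinv (proj2 (repl_spec y))).

Lemma Lact_sinv_cls g o p (Hp : is_loop (sact g o) p) :
  Lact_sinv (cls Hp) = cls (loop_act_sinv Hp).
Proof. by apply/cls_eq; apply/wequiv_pact/rep_cls. Qed.

Lemma LactK g o : cancel (@Lact _ _ S g o) (@Lact_sinv g o).
Proof.
elim/Lam_ind => p Hp; rewrite Lact_cls Lact_sinv_cls; apply/cls_eq.
by rewrite pactK; apply: wequiv_refl.
Qed.

Lemma LactVK g o : cancel (@Lact_sinv g o) (@Lact _ _ S g o).
Proof.
elim/Lam_ind => p Hp; rewrite Lact_sinv_cls Lact_cls; apply/cls_eq.
by rewrite pactVK; apply: wequiv_refl.
Qed.

Lemma Lam_covariant : covariant (@Lmul d K) (@lam d K) (@Lact d K S).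
Proof.
split.
- move=> g o; split; last by exists (@Lact_sinv g o); [apply: LactK | apply: LactVK].
  elim/Lam_ind => p Hp; elim/Lam_ind => q Hq.
  rewrite Lmul_cls !Lact_cls Lmul_cls; apply/cls_eq.
  by rewrite /pcat /pact map_cat; apply: wequiv_refl.
- move=> g h o E; elim/Lam_ind => p Hp.
  rewrite !Lact_cls; apply: sval_inj; rewrite sval_eq_rect /=.
  by apply/wequiv_classE; rewrite pact_mul; apply: wequiv_refl.
- move=> g o a H H'; elim/Lam_ind => p Hp.
  rewrite lam_cls !Lact_cls lam_cls; apply/cls_eq.
  by rewrite (pact_conjp _ H'); apply: wequiv_refl.
Qed.

Lemma incl_Llact : cov_morph (@Llact d K S) (@Lact d K S) (@incl d K).
Proof. by move=> g o x; rewrite incl_clsl incl_repl Lact_cls. Qed.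

Lemma incl_Llact_sinv g o (y : Laml (sact g o)) : incl (Llact_sinv y) = Lact_sinv (incl y).
Proof. by rewrite incl_clsl incl_repl Lact_sinv_cls. Qed.

Lemma Llact_bij g o : bijective (@Llact d K S g o).
Proof.
exists (@Llact_sinv g o) => x; apply: incl_inj.
  by rewrite incl_Llact_sinv -incl_Llact LactK.
by rewrite -incl_Llact incl_Llact_sinv LactVK.
Qed.

Lemma Laml_covariant : covariant (@Llmul d K) (@laml d K) (@Llact d K S).
Proof. exact: covariant_sub Lam_covariant (incl_mono K) incl_Llact Llact_bij. Qed.

End Symmetry.

Theorem proposition3p4 (d : Order.disp_t) (K : porderType d)
    (HK : pathwise_connected K) :
  ( (forall (o : K) p q (Hp : is_loop o p) (Hq : is_loop o q),
        Lmul (cls Hp) (cls Hq) = cls (loop_cat Hp Hq)) /\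
    (forall (o a : K) (H : o <= a) p (Hp : is_loop o p),
        lam H (cls Hp) = cls (loop_conjp H Hp)) /\
    is_net_bundle (@Lmul _ K) (@Lone _ K) (@Linv _ K) (@lam _ K) /\
    is_net (@Llmul _ K) (@Llone _ K) (@Llinv _ K) (@laml _ K) /\
    net_mono (@Llmul _ K) (@Lmul _ K) (@laml _ K) (@lam _ K) (@incl _ K) ) /\
  (forall S : symmetry K,
    (forall (g : sgrp S) (o : K) p (Hp : is_loop o p),
        Lact g (cls Hp) = cls (loop_act g Hp)) /\
    covariant (@Lmul _ K) (@lam _ K) (@Lact _ K S) /\
    covariant (@Llmul _ K) (@laml _ K) (@Llact _ K S) /\
    net_mono (@Llmul _ K) (@Lmul _ K) (@laml _ K) (@lam _ K) (@incl _ K) /\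
    cov_morph (@Llact _ K S) (@Lact _ K S) (@incl _ K)).
Proof.
split.
  split; first exact: Lmul_cls.
  split; first exact: lam_cls.
  split; first exact: Lam_net_bundle.
  by split; [apply: Laml_net | apply: incl_mono].
move=> S; split; first exact: Lact_cls.
split; first exact: Lam_covariant.
split; first exact: Laml_covariant.
by split; [apply: incl_mono | apply: incl_Llact].
Qed.
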